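(* Let $(G,u)$ be a unital $\ell$-group and $M=\Gamma(G,u)$, and suppose every non-zero element of $M$ is a strong unit of $G$. Then $M$ is an MV-algebra, and for every unital Riesz space $(R,1_R)$ the set of $(R,1_R)$-states on $M$ is non-empty, every $(R,1_R)$-state $s$ on $M$ is an $(R,1_R)$-state-morphism, and $\mathrm{Ker}(s)$ is a maximal ideal of $M$. If moreover $(R,1_R)$ is Archimedean, then $M$ has exactly one $(R,1_R)$-state.
   Context: For a unital $\ell$-group $(G,u)$ ($\ell$-group, not necessarily abelian, with strong unit $u$), $\Gamma(G,u)=[0,u]$ with $x\oplus y=(x+y)\wedge u$, $x^-=u-x$, $x^\sim=-x+u$, $x\odot y=(x-u+y)\vee0$ is a pseudo MV-algebra; it is an MV-algebra iff $\oplus$ is commutative. Partial addition: $x+y$ defined iff $x\odot y=0$, then $x+y=x\oplus y$. Ideal: nonempty down-set closed under $\oplus$; maximal = maximal among proper ideals. A unital Riesz space $(R,1_R)$ is a Riesz space with fixed strong unit; Archimedean if $na\le b$ for all $n$ implies $a\le0$. $\Gamma(R,1_R)$ is the MV-algebra on $[0,1_R]$. An $(R,1_R)$-state on $M$ is a map $s:M\to[0,1_R]$ with $s(1)=1_R$, $s(x+y)=s(x)+s(y)$ whenever $x+y$ defined; an $(R,1_R)$-state-morphism is a homomorphism $M\to\Gamma(R,1_R)$. $\mathrm{Ker}(s)=\{x:s(x)=0\}$. *)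

From Stdlib Require Import Reals.
Set Implicit Arguments.

Record lgroup := LGroup {
  lcar :> Type;
  ladd : lcar -> lcar -> lcar;
  lzero : lcar;
  lopp : lcar -> lcar;
  lle : lcar -> lcar -> Prop;
  lmeet : lcar -> lcar -> lcar;
  ljoin : lcar -> lcar -> lcar;
  laddA : forall x y z, ladd x (ladd y z) = ladd (ladd x y) z;
  ladd0l : forall x, ladd lzero x = x;
  ladd0r : forall x, ladd x lzero = x;
  laddNl : forall x, ladd (lopp x) x = lzero;
  laddNr : forall x, ladd x (lopp x) = lzero;
  lle_refl : forall x, lle x x;
  lle_anti : forall x y, lle x y -> lle y x -> x = y;
  lle_trans : forall x y z, lle x y -> lle y z -> lle x z;
  lmeet_l : forall x y, lle (lmeet x y) x;
  lmeet_r : forall x y, lle (lmeet x y) y;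
  lmeet_glb : forall x y z, lle z x -> lle z y -> lle z (lmeet x y);
  ljoin_l : forall x y, lle x (ljoin x y);
  ljoin_r : forall x y, lle y (ljoin x y);
  ljoin_lub : forall x y z, lle x z -> lle y z -> lle (ljoin x y) z;
  lle_add : forall a b x y, lle x y -> lle (ladd (ladd a x) b) (ladd (ladd a y) b)
}.

Arguments ladd {l}. Arguments lzero {l}. Arguments lopp {l}. Arguments lle {l}.
Arguments lmeet {l}. Arguments ljoin {l}.
Arguments laddA {l}. Arguments ladd0l {l}. Arguments ladd0r {l}.
Arguments laddNl {l}. Arguments laddNr {l}. Arguments lle_refl {l}.
Arguments lle_anti {l x y}. Arguments lle_trans {l x y z}.
Arguments lmeet_l {l}. Arguments lmeet_r {l}. Arguments lmeet_glb {l x y z}.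
Arguments ljoin_l {l}. Arguments ljoin_r {l}. Arguments ljoin_lub {l x y z}.
Arguments lle_add {l} a b {x y}.

Fixpoint lnmul {G : lgroup} (n : nat) (x : G) : G :=
  match n with O => lzero | S m => ladd x (lnmul m x) end.

Definition lstrong_unit {G : lgroup} (u : G) : Prop :=
  lle lzero u /\ u <> lzero /\ forall g : G, exists n : nat, lle g (lnmul n u).

Definition Gam {G : lgroup} (u : G) : Type := { x : G | lle lzero x /\ lle x u }.

Section GamOps.
Variables (G : lgroup) (u : G).

Lemma lle_addl (a x y : G) : lle x y -> lle (ladd a x) (ladd a y).
Proof. intro H. pose proof (lle_add a lzero H) as K. rewrite !ladd0r in K. exact K. Qed.
Lemma lle_addr (b x y : G) : lle x y -> lle (ladd x b) (ladd y b).
Proof. intro H. pose proof (lle_add lzero b H) as K. rewrite !ladd0l in K. exact K. Qed.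

Lemma lle_opp0 (x : G) : lle lzero x -> lle (lopp x) lzero.
Proof. intro H. pose proof (@lle_addl (lopp x) _ _ H) as K.
  rewrite ladd0r, laddNl in K. exact K. Qed.

Lemma lle_add0 (x y : G) : lle lzero x -> lle lzero y -> lle lzero (ladd x y).
Proof. intros Hx Hy. apply (lle_trans Hx).
  pose proof (@lle_addl x _ _ Hy) as K. rewrite ladd0r in K. exact K. Qed.

Lemma Gam_top_ok : lle lzero u -> lle lzero u /\ lle u u.
Proof. intro H; split; [exact H | apply lle_refl]. Qed.

Definition Gam1 (Hu : lle lzero u) : Gam u := exist _ u (Gam_top_ok Hu).

Lemma Gam_zero_ok : lle lzero u -> lle (@lzero G) lzero /\ lle lzero u.
Proof. intro H; split; [apply lle_refl | exact H]. Qed.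

Definition Gam0 (Hu : lle lzero u) : Gam u := exist _ lzero (Gam_zero_ok Hu).

Lemma oplus_ok (x y : Gam u) :
  lle lzero (lmeet (ladd (proj1_sig x) (proj1_sig y)) u) /\
  lle (lmeet (ladd (proj1_sig x) (proj1_sig y)) u) u.
Proof.
  destruct x as [x [Hx0 Hxu]], y as [y [Hy0 Hyu]]; simpl. split.
  - apply lmeet_glb; [apply lle_add0; assumption | exact (lle_trans Hx0 Hxu)].
  - apply lmeet_r.
Qed.

(* x ⊕ y = (x + y) ∧ u *)
Definition Goplus (x y : Gam u) : Gam u := exist _ _ (oplus_ok x y).

Lemma negm_ok (x : Gam u) :
  lle lzero (ladd u (lopp (proj1_sig x))) /\ lle (ladd u (lopp (proj1_sig x))) u.
Proof.
  destruct x as [x [Hx0 Hxu]]; simpl. split.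
  - pose proof (@lle_addr (lopp x) _ _ Hxu) as K. rewrite laddNr in K. exact K.
  - pose proof (@lle_addl u _ _ (lle_opp0 _ Hx0)) as K. rewrite ladd0r in K. exact K.
Qed.

(* x^- = u - x *)
Definition Gnegm (x : Gam u) : Gam u := exist _ _ (negm_ok x).

Lemma negt_ok (x : Gam u) :
  lle lzero (ladd (lopp (proj1_sig x)) u) /\ lle (ladd (lopp (proj1_sig x)) u) u.
Proof.
  destruct x as [x [Hx0 Hxu]]; simpl. split.
  - pose proof (@lle_addl (lopp x) _ _ Hxu) as K. rewrite laddNl in K. exact K.
  - pose proof (@lle_addr u _ _ (lle_opp0 _ Hx0)) as K. rewrite ladd0l in K. exact K.
Qed.

(* x^~ = -x + u *)
Definition Gnegt (x : Gam u) : Gam u := exist _ _ (negt_ok x).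

Definition Godot (x y : Gam u) : G :=
  ljoin (ladd (ladd (proj1_sig x) (lopp u)) (proj1_sig y)) lzero.

(* x + y is defined (partial addition) iff x ⊙ y = 0; then x + y = x ⊕ y *)
Definition Gsum_defined (x y : Gam u) : Prop := Godot x y = lzero.

Definition Gideal (I : Gam u -> Prop) : Prop :=
  (exists x, I x) /\
  (forall x y : Gam u, I y -> lle (proj1_sig x) (proj1_sig y) -> I x) /\
  (forall x y : Gam u, I x -> I y -> I (Goplus x y)).

Definition Gmaximal_ideal (I : Gam u -> Prop) : Prop :=
  Gideal I /\ (exists x, ~ I x) /\
  forall J : Gam u -> Prop, Gideal J -> (exists x, ~ J x) ->
    (forall x, I x -> J x) -> forall x, J x -> I x.

(* Γ(G,u) is an MV-algebra iff ⊕ is commutative *)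
Definition Gam_is_MV : Prop := forall x y : Gam u, Goplus x y = Goplus y x.

End GamOps.
Arguments Gam1 {G u}. Arguments Gam0 {G u}. Arguments Goplus {G u}.
Arguments Gnegm {G u}. Arguments Gnegt {G u}. Arguments Godot {G u}.
Arguments Gsum_defined {G u}. Arguments Gideal {G u}.
Arguments Gmaximal_ideal {G u}. Arguments Gam_is_MV {G} u.

Record riesz := Riesz {
  rcar :> Type;
  radd : rcar -> rcar -> rcar;
  rzero : rcar;
  ropp : rcar -> rcar;
  rscal : R -> rcar -> rcar;
  rle : rcar -> rcar -> Prop;
  rmeet : rcar -> rcar -> rcar;
  rjoin : rcar -> rcar -> rcar;
  raddA : forall x y z, radd x (radd y z) = radd (radd x y) z;
  raddC : forall x y, radd x y = radd y x;
  radd0 : forall x, radd rzero x = x;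
  raddN : forall x, radd (ropp x) x = rzero;
  rscalA : forall a b x, rscal a (rscal b x) = rscal (a * b) x;
  rscal1 : forall x, rscal 1 x = x;
  rscalDr : forall a x y, rscal a (radd x y) = radd (rscal a x) (rscal a y);
  rscalDl : forall a b x, rscal (a + b) x = radd (rscal a x) (rscal b x);
  rle_refl : forall x, rle x x;
  rle_anti : forall x y, rle x y -> rle y x -> x = y;
  rle_trans : forall x y z, rle x y -> rle y z -> rle x z;
  rmeet_l : forall x y, rle (rmeet x y) x;
  rmeet_r : forall x y, rle (rmeet x y) y;
  rmeet_glb : forall x y z, rle z x -> rle z y -> rle z (rmeet x y);
  rjoin_l : forall x y, rle x (rjoin x y);
  rjoin_r : forall x y, rle y (rjoin x y);
  rjoin_lub : forall x y z, rle x z -> rle y z -> rle (rjoin x y) z;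
  rle_add : forall z x y, rle x y -> rle (radd x z) (radd y z);
  rle_scal : forall a x y, (0 <= a)%R -> rle x y -> rle (rscal a x) (rscal a y)
}.

Arguments radd {r}. Arguments rzero {r}. Arguments ropp {r}. Arguments rscal {r}.
Arguments rle {r}. Arguments rmeet {r}. Arguments rjoin {r}.
Arguments raddA {r}. Arguments raddC {r}. Arguments radd0 {r}. Arguments raddN {r}.
Arguments rscalA {r}. Arguments rscal1 {r}. Arguments rscalDr {r}. Arguments rscalDl {r}.
Arguments rle_refl {r}. Arguments rle_anti {r x y}. Arguments rle_trans {r x y z}.
Arguments rmeet_l {r}. Arguments rmeet_r {r}. Arguments rmeet_glb {r x y z}.
Arguments rjoin_l {r}. Arguments rjoin_r {r}. Arguments rjoin_lub {r x y z}.
Arguments rle_add {r} z {x y}. Arguments rle_scal {r} a {x y}.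

Fixpoint rnmul {V : riesz} (n : nat) (x : V) : V :=
  match n with O => rzero | S m => radd x (rnmul m x) end.

Definition rstrong_unit {V : riesz} (e : V) : Prop :=
  rle rzero e /\ e <> rzero /\ forall v : V, exists n : nat, rle v (rnmul n e).

Definition archimedean (V : riesz) : Prop :=
  forall a b : V, (forall n : nat, rle (rnmul n a) b) -> rle a rzero.

Section States.
Variables (G : lgroup) (u : G) (Hu : lle lzero u) (V : riesz) (e : V).

Definition is_Rstate (s : Gam u -> V) : Prop :=
  (forall x, rle rzero (s x) /\ rle (s x) e) /\
  s (Gam1 Hu) = e /\
  (forall x y, Gsum_defined x y -> s (Goplus x y) = radd (s x) (s y)).

(* homomorphism of (pseudo) MV-algebras Γ(G,u) -> Γ(V,e) *)
Definition is_Rstate_morphism (s : Gam u -> V) : Prop :=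
  (forall x, rle rzero (s x) /\ rle (s x) e) /\
  s (Gam0 Hu) = rzero /\
  (forall x y, s (Goplus x y) = rmeet (radd (s x) (s y)) e) /\
  (forall x, s (Gnegm x) = radd e (ropp (s x))) /\
  (forall x, s (Gnegt x) = radd (ropp (s x)) e).

Definition Ker (s : Gam u -> V) : Gam u -> Prop := fun x => s x = rzero.

End States.
Arguments is_Rstate {G u} Hu {V} e s. Arguments is_Rstate_morphism {G u} Hu {V} e s.
Arguments Ker {G u V} s.

(* The hypothesis makes G totally ordered (of two disjoint positive elements one
   vanishes, since a non-zero element of [0,u] is a strong unit dominating the
   other) and Archimedean (every positive element is a strong unit), hence abelian
   by Hölder's theorem; so ⊕ is commutative.  Measuring x in units of u,
   umeas x = sup {p/q : p u <= q x} is additive, so x ↦ umeas x · 1_R is a state.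
   A state s is monotone with s (u - x) = 1_R - s x, which by totality of the order
   makes it a state-morphism; its kernel is {0}, and {0} is maximal because an ideal
   containing x ≠ 0 contains n x ∧ u = u.  In an Archimedean R, writing
   q x = k u + r with 0 <= r < u gives k 1_R <= q s(x) <= (k + 1) 1_R, which
   forces s x = umeas x · 1_R. *)

From Stdlib Require Import Reals Lra Lia Classical ProofIrrelevance.

Infix "⊞" := ladd (at level 50, left associativity).
Infix "≼" := lle (at level 70).

Section LGroupTheory.
Context {G : lgroup}.
Implicit Types a b c d g x y z w : G.

Lemma ladd_cancel_l a x y : a ⊞ x = a ⊞ y -> x = y.
Proof. intro H. rewrite <- (ladd0l x), <- (ladd0l y), <- (laddNl a), <- !laddA, H. reflexivity. Qed.

Lemma ladd_cancel_r a x y : x ⊞ a = y ⊞ a -> x = y.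
Proof. intro H. rewrite <- (ladd0r x), <- (ladd0r y), <- (laddNr a), !laddA, H. reflexivity. Qed.

Lemma lsubrK x y : x ⊞ lopp y ⊞ y = x.
Proof. rewrite <- laddA, laddNl, ladd0r. reflexivity. Qed.

Lemma laddrK x y : x ⊞ y ⊞ lopp y = x.
Proof. rewrite <- laddA, laddNr, ladd0r. reflexivity. Qed.

Lemma laddKl x y : lopp x ⊞ (x ⊞ y) = y.
Proof. rewrite laddA, laddNl, ladd0l. reflexivity. Qed.

Lemma lsubKl x y : x ⊞ (lopp x ⊞ y) = y.
Proof. rewrite laddA, laddNr, ladd0l. reflexivity. Qed.

Lemma lopp0 : lopp (@lzero G) = lzero.
Proof. apply (ladd_cancel_l lzero). rewrite laddNr, ladd0l. reflexivity. Qed.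

Lemma loppK x : lopp (lopp x) = x.
Proof. apply (ladd_cancel_l (lopp x)). rewrite laddNr, laddNl. reflexivity. Qed.

Lemma lle_add2 a b c d : a ≼ b -> c ≼ d -> a ⊞ c ≼ b ⊞ d.
Proof. intros H1 H2. apply (lle_trans (lle_addr G c _ _ H1)), lle_addl, H2. Qed.

Lemma lle_addl_inv a x y : a ⊞ x ≼ a ⊞ y -> x ≼ y.
Proof. intro H. pose proof (lle_addl G (lopp a) _ _ H) as K. rewrite !laddKl in K. exact K. Qed.

Lemma lle_addr_inv a x y : x ⊞ a ≼ y ⊞ a -> x ≼ y.
Proof. intro H. pose proof (lle_addr G (lopp a) _ _ H) as K. rewrite !laddrK in K. exact K. Qed.

Lemma lle_opp x y : x ≼ y -> lopp y ≼ lopp x.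
Proof.
  intro H. pose proof (lle_add (lopp y) (lopp x) H) as K.
  rewrite laddNl, ladd0l, <- laddA, laddNr, ladd0r in K. exact K.
Qed.

Lemma lle_opp_ge0 x : x ≼ lzero -> lzero ≼ lopp x.
Proof. intro H. rewrite <- lopp0. apply lle_opp, H. Qed.

Lemma lsubr_ge0 x y : x ≼ y -> lzero ≼ y ⊞ lopp x.
Proof. intro H. rewrite <- (laddNr x). apply lle_addr, H. Qed.

Lemma lle_addl_ge0 a x : lzero ≼ a -> x ≼ a ⊞ x.
Proof. intro H. pose proof (lle_addr G x _ _ H) as K. rewrite ladd0l in K. exact K. Qed.

Lemma lle_addr_ge0 a x : lzero ≼ a -> x ≼ x ⊞ a.
Proof. intro H. pose proof (lle_addl G x _ _ H) as K. rewrite ladd0r in K. exact K. Qed.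

Lemma lmeet_idl x y : x ≼ y -> lmeet x y = x.
Proof. intro H. apply lle_anti; [apply lmeet_l | apply lmeet_glb; [apply lle_refl | exact H]]. Qed.

Lemma ljoin_idr x y : x ≼ y -> ljoin x y = y.
Proof. intro H. apply lle_anti; [apply ljoin_lub; [exact H | apply lle_refl] | apply ljoin_r]. Qed.

Lemma lmeetC x y : lmeet x y = lmeet y x.
Proof. apply lle_anti; apply lmeet_glb; first [apply lmeet_l | apply lmeet_r]. Qed.

Lemma lmeet_ge0 x y : lzero ≼ x -> lzero ≼ y -> lzero ≼ lmeet x y.
Proof. intros Hx Hy. apply lmeet_glb; assumption. Qed.

Lemma lmeet_addl a x y : a ⊞ lmeet x y = lmeet (a ⊞ x) (a ⊞ y).
Proof.
  apply lle_anti.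
  - apply lmeet_glb; apply lle_addl; [apply lmeet_l | apply lmeet_r].
  - apply (lle_addl_inv (lopp a)). rewrite laddKl.
    apply lmeet_glb; apply (lle_addl_inv a); rewrite lsubKl; [apply lmeet_l | apply lmeet_r].
Qed.

Lemma lmeet_addr x y b : lmeet x y ⊞ b = lmeet (x ⊞ b) (y ⊞ b).
Proof.
  apply lle_anti.
  - apply lmeet_glb; apply lle_addr; [apply lmeet_l | apply lmeet_r].
  - apply (lle_addr_inv (lopp b)). rewrite laddrK.
    apply lmeet_glb; apply (lle_addr_inv b); rewrite lsubrK; [apply lmeet_l | apply lmeet_r].
Qed.

Lemma lnmul_ge0 n x : lzero ≼ x -> lzero ≼ lnmul n x.
Proof. intro H. induction n; simpl; [apply lle_refl | apply lle_add0; assumption]. Qed.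

Lemma lnmul_le n x y : x ≼ y -> lnmul n x ≼ lnmul n y.
Proof. intro H. induction n; simpl; [apply lle_refl | apply lle_add2; assumption]. Qed.

Lemma lnmulD m n x : lnmul m x ⊞ lnmul n x = lnmul (m + n) x.
Proof. induction m; simpl; [apply ladd0l | rewrite <- laddA, IHm; reflexivity]. Qed.

Lemma lnmulC n x : x ⊞ lnmul n x = lnmul n x ⊞ x.
Proof.
  transitivity (lnmul 1 x ⊞ lnmul n x); [simpl; rewrite ladd0r; reflexivity|].
  rewrite lnmulD, Nat.add_comm, <- lnmulD. simpl. rewrite ladd0r. reflexivity.
Qed.

Lemma lnmul0 n : lnmul n (@lzero G) = lzero.
Proof. induction n; simpl; [reflexivity | rewrite IHn, ladd0l; reflexivity]. Qed.

Lemma lnmulM p q g : lnmul p (lnmul q g) = lnmul (p * q) g.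
Proof. induction p; simpl; [reflexivity | rewrite IHp, lnmulD; reflexivity]. Qed.

Lemma lmeet_add_disjoint x y w : lzero ≼ x -> lzero ≼ y -> lzero ≼ w ->
  lmeet x y = lzero -> lmeet x w = lzero -> lmeet x (y ⊞ w) = lzero.
Proof.
  intros Hx Hy Hw Hxy Hxw. apply lle_anti; [| apply lmeet_ge0; [exact Hx | apply lle_add0; assumption]].
  rewrite <- Hxy. apply lmeet_glb; [apply lmeet_l|].
  apply (lle_trans (y := lmeet (y ⊞ x) (y ⊞ w))).
  - apply lmeet_glb; [apply (lle_trans (lmeet_l _ _)), lle_addl_ge0, Hy | apply lmeet_r].
  - rewrite <- lmeet_addl, Hxw, ladd0r. apply lle_refl.
Qed.

Lemma lmeet_nmul_disjoint x y n : lzero ≼ x -> lzero ≼ y ->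
  lmeet x y = lzero -> lmeet x (lnmul n y) = lzero.
Proof.
  intros Hx Hy H. induction n; simpl.
  - apply lle_anti; [apply lmeet_r | apply lmeet_glb; [exact Hx | apply lle_refl]].
  - apply lmeet_add_disjoint; auto using lnmul_ge0.
Qed.

Lemma disjoint_le_nmul_eq0 a w n : lzero ≼ a -> lzero ≼ w ->
  lmeet a w = lzero -> a ≼ lnmul n w -> a = lzero.
Proof. intros Ha Hw Haw H. rewrite <- (lmeet_idl _ _ H). apply lmeet_nmul_disjoint; assumption. Qed.

(* [y - x] is the sum of the disjoint parts [g - g ∧ 0 >= 0] and [g ∧ 0 <= 0]. *)
Lemma total_of_disjoint :
  (forall a b, lzero ≼ a -> lzero ≼ b -> lmeet a b = lzero -> a = lzero \/ b = lzero) ->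
  forall x y, x ≼ y \/ y ≼ x.
Proof.
  intros Hdisj x y. set (g := y ⊞ lopp x). set (c := lmeet g lzero).
  assert (Hc : c ≼ lzero) by apply lmeet_r.
  assert (Hpos : lzero ≼ g ⊞ lopp c) by (apply lsubr_ge0, lmeet_l).
  assert (Hdisjgc : lmeet (g ⊞ lopp c) (lopp c) = lzero).
  { rewrite <- (ladd0l (lopp c)) at 2. rewrite <- lmeet_addr. apply laddNr. }
  destruct (Hdisj _ _ Hpos (lle_opp_ge0 _ Hc) Hdisjgc) as [E|E].
  - right. apply (lle_addr_inv (lopp x)). rewrite laddNr. fold g.
    replace g with c by (rewrite <- (lsubrK g c), E, ladd0l; reflexivity). exact Hc.
  - left. apply (lle_addr_inv (lopp x)). rewrite laddNr. fold g.
    replace lzero with c by (rewrite <- (loppK c), E; apply lopp0). apply lmeet_l.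
Qed.

Definition llt x y := x ≼ y /\ x <> y.

Lemma llt_not_le x y : llt x y -> ~ y ≼ x.
Proof. intros [H1 H2] H3. apply H2, lle_anti; assumption. Qed.

Lemma llt_le_trans x y z : llt x y -> y ≼ z -> llt x z.
Proof.
  intros [H1 H2] H3. split; [exact (lle_trans H1 H3) | intro E; subst; apply H2, lle_anti; assumption].
Qed.

Lemma le_llt_trans x y z : x ≼ y -> llt y z -> llt x z.
Proof.
  intros H1 [H2 H3]. split; [exact (lle_trans H1 H2) | intro E; subst; apply H3, lle_anti; assumption].
Qed.

Lemma llt_addl a x y : llt x y -> llt (a ⊞ x) (a ⊞ y).
Proof. intros [H1 H2]. split; [apply lle_addl, H1 | intro E; apply H2, (ladd_cancel_l _ _ _ E)]. Qed.

Lemma llt_addr a x y : llt x y -> llt (x ⊞ a) (y ⊞ a).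
Proof. intros [H1 H2]. split; [apply lle_addr, H1 | intro E; apply H2, (ladd_cancel_r _ _ _ E)]. Qed.

Lemma llt_le_add a b c d : llt a b -> c ≼ d -> llt (a ⊞ c) (b ⊞ d).
Proof. intros H1 H2. apply (llt_le_trans _ (b ⊞ c)); [apply llt_addr, H1 | apply lle_addl, H2]. Qed.

Lemma le_llt_add a b c d : a ≼ b -> llt c d -> llt (a ⊞ c) (b ⊞ d).
Proof. intros H1 H2. apply (le_llt_trans _ (b ⊞ c)); [apply lle_addr, H1 | apply llt_addl, H2]. Qed.

Lemma lnmul_llt n a b : (0 < n)%nat -> llt a b -> llt (lnmul n a) (lnmul n b).
Proof. intros Hn H. destruct n; [lia|]. apply llt_le_add; [exact H | apply lnmul_le, H]. Qed.

Lemma lnmul_gt0 n d : (0 < n)%nat -> llt lzero d -> llt lzero (lnmul n d).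
Proof. intros Hn H. rewrite <- (lnmul0 n). apply lnmul_llt; assumption. Qed.

End LGroupTheory.

Section Gamma.
Context {G : lgroup} {u : G} (Hu0 : lzero ≼ u).
Implicit Types x y : Gam u.

Lemma Gam_eq x y : proj1_sig x = proj1_sig y -> x = y.
Proof. destruct x as [x Hx], y as [y Hy]; simpl. intro E; subst. f_equal. apply proof_irrelevance. Qed.

Lemma Gsub_ok y x : proj1_sig x ≼ proj1_sig y ->
  lzero ≼ proj1_sig y ⊞ lopp (proj1_sig x) /\ proj1_sig y ⊞ lopp (proj1_sig x) ≼ u.
Proof.
  intro H. split; [apply lsubr_ge0, H|].
  apply (lle_trans (y := proj1_sig y)); [| exact (proj2 (proj2_sig y))].
  apply lle_addr_inv with (proj1_sig x). rewrite lsubrK. apply lle_addr_ge0, (proj1 (proj2_sig x)).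
Qed.

Definition Gsub y x (H : proj1_sig x ≼ proj1_sig y) : Gam u := exist _ _ (Gsub_ok y x H).

Fixpoint Gnmul n x : Gam u :=
  match n with O => Gam0 Hu0 | S m => Goplus x (Gnmul m x) end.

Lemma Gnmul_val n x : proj1_sig (Gnmul n x) = lmeet (lnmul n (proj1_sig x)) u.
Proof.
  destruct x as [x [Hx0 Hxu]]. induction n as [|n IH]; simpl in *.
  - symmetry. apply lmeet_idl, Hu0.
  - rewrite IH, lmeet_addl. apply lle_anti; apply lmeet_glb; try apply lmeet_r.
    + apply (lle_trans (lmeet_l _ _)), lmeet_l.
    + apply lmeet_glb; [apply lmeet_l | apply (lle_trans (lmeet_r _ _)), lle_addl_ge0, Hx0].
Qed.

Lemma Gideal_Gam0 (J : Gam u -> Prop) : Gideal J -> J (Gam0 Hu0).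
Proof. intros [[y Jy] [Jdown _]]. apply (Jdown _ y Jy). exact (proj1 (proj2_sig y)). Qed.

Lemma Gideal_Gnmul (J : Gam u -> Prop) n x : Gideal J -> J x -> J (Gnmul n x).
Proof.
  intros HJ Jx. induction n as [|n IH]; [exact (Gideal_Gam0 J HJ) | apply (proj2 (proj2 HJ)); assumption].
Qed.

End Gamma.

(** * Hölder's theorem *)

Section TotallyOrdered.
Context {G : lgroup}.
Hypothesis Htot : forall x y : G, x ≼ y \/ y ≼ x.
Implicit Types a b c d g x y z w eps : G.

Lemma lle_or_llt x y : x ≼ y \/ llt y x.
Proof.
  destruct (Htot x y) as [H|H]; [left; exact H|].
  destruct (classic (x = y)) as [E|E]; [left; rewrite E; apply lle_refl | right; split; auto].
Qed.

Lemma lnmul_floor d x : llt lzero d -> (forall g, exists n, g ≼ lnmul n d) -> lzero ≼ x ->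
  exists m, lnmul m d ≼ x /\ llt x (lnmul (S m) d).
Proof.
  intros Hd Hdx Hx. destruct (Hdx x) as [N HN].
  assert (HSN : llt x (lnmul (S N) d)).
  { simpl. rewrite <- (ladd0l x). apply llt_le_add; assumption. }
  clear HN. induction N as [|N IH].
  - exists 0%nat. split; [exact Hx | exact HSN].
  - destruct (lle_or_llt (lnmul (S N) d) x) as [L|L]; [exists (S N); split; assumption | exact (IH L)].
Qed.

Section Archimedean.
Hypothesis Harch : forall d, llt lzero d -> forall g, exists n, g ≼ lnmul n d.

Lemma nonneg_multiple_of_least_pos a : llt lzero a -> (forall z, llt lzero z -> a ≼ z) ->
  forall w, lzero ≼ w -> exists m, w = lnmul m a.
Proof.
  intros Ha Hmin w Hw. destruct (lnmul_floor a w Ha (Harch a Ha) Hw) as [m [H1 H2]]. exists m.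
  set (r := lopp (lnmul m a) ⊞ w).
  assert (Ew : w = lnmul m a ⊞ r) by (unfold r; rewrite lsubKl; reflexivity).
  destruct (lle_or_llt r lzero) as [Hr|Hr].
  - rewrite Ew, (lle_anti Hr (lle_addl_inv (lnmul m a) _ _ ltac:(rewrite ladd0r, <- Ew; exact H1))).
    apply ladd0r.
  - assert (Hra : llt r a).
    { pose proof (llt_addl (lopp (lnmul m a)) _ _ H2) as K. simpl in K.
      rewrite lnmulC, laddKl in K. exact K. }
    exfalso. exact (llt_not_le _ _ Hra (Hmin r Hr)).
Qed.

Lemma exists_half_below :
  ~ (exists a, llt lzero a /\ forall z, llt lzero z -> a ≼ z) ->
  forall eps, llt lzero eps -> exists d, llt lzero d /\ d ⊞ d ≼ eps.
Proof.
  intros Hnomin eps Heps.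
  assert (Hc : exists c, llt lzero c /\ llt c eps).
  { apply NNPP. intro K. apply Hnomin. exists eps. split; [exact Heps|]. intros z Hz.
    destruct (lle_or_llt eps z) as [L|L]; [exact L|]. exfalso. apply K. exists z. auto. }
  destruct Hc as [c [Hc0 Hce]].
  destruct (lle_or_llt (c ⊞ c) eps) as [L|L]; [exists c; auto|].
  exists (lopp c ⊞ eps). split.
  - rewrite <- (laddNl c). apply llt_addl, Hce.
  - apply (lle_trans (y := c ⊞ (lopp c ⊞ eps))); [| rewrite lsubKl; apply lle_refl].
    apply lle_addr, (lle_addl_inv c). rewrite lsubKl. apply L.
Qed.

(* Approximating [x] and [y] by multiples of [d] shows that the commutator
   [-(x + y) + (y + x)] lies strictly below [2 d]. *)
Lemma commutator_llt_double x y d : lzero ≼ x -> lzero ≼ y -> llt lzero d ->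
  llt (lopp (x ⊞ y) ⊞ (y ⊞ x)) (d ⊞ d).
Proof.
  intros Hx Hy Hd.
  destruct (lnmul_floor d x Hd (Harch d Hd) Hx) as [m [Hm1 Hm2]].
  destruct (lnmul_floor d y Hd (Harch d Hd) Hy) as [n [Hn1 Hn2]].
  assert (Hlow : lnmul (m + n) d ≼ x ⊞ y) by (rewrite <- lnmulD; apply lle_add2; assumption).
  assert (Hup : llt (y ⊞ x) (lnmul (m + n) d ⊞ (d ⊞ d))).
  { apply (llt_le_trans _ (lnmul (S n) d ⊞ lnmul (S m) d)); [apply llt_le_add; [|apply Hm2]; assumption|].
    replace (d ⊞ d) with (lnmul 2 d) by (simpl; rewrite ladd0r; reflexivity).
    rewrite !lnmulD. replace (S n + S m)%nat with (m + n + 2)%nat by lia. apply lle_refl. }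
  rewrite <- (laddKl (lnmul (m + n) d) (d ⊞ d)).
  apply le_llt_add; [apply lle_opp, Hlow | exact Hup].
Qed.

(* Either there is a least positive element, and [x], [y] are multiples of it, or positive
   elements get arbitrarily small, and then no positive commutator survives. *)
Lemma laddC_ge0 x y : lzero ≼ x -> lzero ≼ y -> x ⊞ y = y ⊞ x.
Proof.
  assert (Hnotlt : forall x y, lzero ≼ x -> lzero ≼ y -> ~ llt (x ⊞ y) (y ⊞ x)).
  { clear x y. intros x y Hx Hy Hlt.
    set (eps := lopp (x ⊞ y) ⊞ (y ⊞ x)).
    assert (Heps : llt lzero eps) by (unfold eps; rewrite <- (laddNl (x ⊞ y)); apply llt_addl, Hlt).
    destruct (classic (exists a, llt lzero a /\ forall z, llt lzero z -> a ≼ z)) as [[a [Ha Hmin]]|Hnomin].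
    - destruct (nonneg_multiple_of_least_pos a Ha Hmin x Hx) as [m Em].
      destruct (nonneg_multiple_of_least_pos a Ha Hmin y Hy) as [n En].
      apply (proj2 Hlt). rewrite Em, En, !lnmulD, Nat.add_comm. reflexivity.
    - destruct (exists_half_below Hnomin eps Heps) as [d [Hd Hdd]].
      exact (llt_not_le _ _ (commutator_llt_double x y d Hx Hy Hd) Hdd). }
  intros Hx Hy. destruct (lle_or_llt (x ⊞ y) (y ⊞ x)) as [L|L].
  - destruct (classic (x ⊞ y = y ⊞ x)) as [E|E]; [exact E|].
    exfalso. exact (Hnotlt x y Hx Hy (conj L E)).
  - exfalso. exact (Hnotlt y x Hy Hx L).
Qed.

Lemma laddC x y : x ⊞ y = y ⊞ x.
Proof.
  assert (Hopp : forall x y, x ⊞ y = y ⊞ x -> lopp x ⊞ y = y ⊞ lopp x).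
  { clear x y. intros x y H. apply (ladd_cancel_l x).
    rewrite lsubKl, laddA, H, laddrK. reflexivity. }
  assert (Hge0 : forall x y, lzero ≼ x -> x ⊞ y = y ⊞ x).
  { clear x y. intros x y Hx. destruct (Htot lzero y) as [Hy|Hy]; [apply laddC_ge0; assumption|].
    rewrite <- (loppK y). symmetry. apply Hopp. symmetry.
    apply laddC_ge0; [exact Hx | apply lle_opp_ge0, Hy]. }
  destruct (Htot lzero x) as [Hx|Hx]; [apply Hge0, Hx|].
  rewrite <- (loppK x). apply Hopp, Hge0, lle_opp_ge0, Hx.
Qed.

End Archimedean.
End TotallyOrdered.

Section StrongUnitInterval.
Context {G : lgroup} (u : G).
Hypothesis Hu : lstrong_unit u.
Hypothesis Hstrong : forall x : G, lzero ≼ x -> x ≼ u -> x <> lzero ->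
  forall g, exists n, g ≼ lnmul n x.
Implicit Types a b d g x y : G.

Lemma disjoint_ge0_eq0 a b : lzero ≼ a -> lzero ≼ b -> lmeet a b = lzero -> a = lzero \/ b = lzero.
Proof.
  intros Ha Hb Hab. destruct Hu as [Hu0 [_ Hub]].
  assert (Hcut : forall c, lzero ≼ c -> lmeet c u = lzero -> c = lzero).
  { intros c Hc Hcu. destruct (Hub c) as [n Hn]. exact (disjoint_le_nmul_eq0 c u n Hc Hu0 Hcu Hn). }
  set (a' := lmeet a u). set (b' := lmeet b u).
  assert (Ha' : lzero ≼ a') by (apply lmeet_ge0; assumption).
  assert (Hb' : lzero ≼ b') by (apply lmeet_ge0; assumption).
  assert (Hab' : lmeet a' b' = lzero).
  { apply lle_anti; [rewrite <- Hab | apply lmeet_ge0; assumption].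
    apply lmeet_glb; [apply (lle_trans (lmeet_l _ _)), lmeet_l | apply (lle_trans (lmeet_r _ _)), lmeet_l]. }
  destruct (classic (a' = lzero)) as [E|E]; [left; apply Hcut; assumption|].
  destruct (classic (b' = lzero)) as [F|F]; [right; apply Hcut; assumption|].
  exfalso. apply E. destruct (Hstrong b' Hb' (lmeet_r _ _) F a') as [n Hn].
  exact (disjoint_le_nmul_eq0 a' b' n Ha' Hb' Hab' Hn).
Qed.

Lemma lle_total x y : x ≼ y \/ y ≼ x.
Proof. apply total_of_disjoint, disjoint_ge0_eq0. Qed.

Lemma llt0_strong_unit d : llt lzero d -> forall g, exists n, g ≼ lnmul n d.
Proof.
  intros [Hd Hd0] g. destruct (lle_total d u) as [H|H]; [apply Hstrong; auto|].
  destruct (proj2 (proj2 Hu) g) as [n Hn]. exists n. exact (lle_trans Hn (lnmul_le n _ _ H)).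
Qed.

Lemma Gideal_proper_eq0 (J : Gam u -> Prop) (x : Gam u) :
  Gideal J -> (exists z : Gam u, ~ J z) -> J x -> proj1_sig x = lzero.
Proof.
  intros HJ [z Jz] Jx. apply NNPP. intro Hx. apply Jz.
  destruct (Hstrong _ (proj1 (proj2_sig x)) (proj2 (proj2_sig x)) Hx u) as [n Hn].
  assert (E : Gnmul (proj1 Hu) n x = Gam1 (proj1 Hu)).
  { apply Gam_eq. rewrite Gnmul_val. simpl. rewrite lmeetC. apply lmeet_idl, Hn. }
  apply (proj1 (proj2 HJ) z (Gnmul (proj1 Hu) n x)); [apply Gideal_Gnmul; assumption|].
  rewrite E. exact (proj2 (proj2_sig z)).
Qed.

End StrongUnitInterval.

(** * Riesz spaces *)

Section RieszTheory.
Context {V : riesz}.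
Implicit Types a b c d v w e : V.

Lemma radd0r v : radd v rzero = v.
Proof. rewrite raddC; apply radd0. Qed.

Lemma raddNr v : radd v (ropp v) = rzero.
Proof. rewrite raddC; apply raddN. Qed.

Lemma radd_cancel_l a v w : radd a v = radd a w -> v = w.
Proof. intro H. rewrite <- (radd0 v), <- (radd0 w), <- (raddN a), <- !raddA, H. reflexivity. Qed.

Lemma raddCA a b c : radd a (radd b c) = radd b (radd a c).
Proof. rewrite !raddA, (raddC a b). reflexivity. Qed.

Lemma rle_add2 a b c d : rle a b -> rle c d -> rle (radd a c) (radd b d).
Proof. intros H1 H2. apply (rle_trans (rle_add c H1)). rewrite !(raddC b). apply rle_add, H2. Qed.

Lemma rle_addr_ge0 a v : rle rzero a -> rle v (radd v a).
Proof. intro H. rewrite <- (radd0r v) at 1. apply rle_add2; [apply rle_refl | exact H]. Qed.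

Lemma roppK v : ropp (ropp v) = v.
Proof. apply (radd_cancel_l (ropp v)). rewrite raddNr, raddN. reflexivity. Qed.

Lemma rle_opp v w : rle v w -> rle (ropp w) (ropp v).
Proof.
  intro H. pose proof (rle_add (radd (ropp v) (ropp w)) H) as K.
  rewrite raddA, raddNr, radd0, raddCA, raddNr, radd0r in K. exact K.
Qed.

Lemma rscal0l v : rscal 0 v = rzero.
Proof. apply (radd_cancel_l (rscal 0 v)). rewrite <- rscalDl, Rplus_0_r, radd0r. reflexivity. Qed.

Lemma rscal0r (k : R) : rscal k (@rzero V) = rzero.
Proof. apply (radd_cancel_l (rscal k rzero)). rewrite <- rscalDr, !radd0r. reflexivity. Qed.

Lemma rscalN (k : R) v : rscal (- k) v = ropp (rscal k v).
Proof.
  apply (radd_cancel_l (rscal k v)). rewrite <- rscalDl, raddNr, Rplus_opp_r. apply rscal0l.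
Qed.

Lemma rscal_opp (k : R) v : rscal k (ropp v) = ropp (rscal k v).
Proof. apply (radd_cancel_l (rscal k v)). rewrite <- rscalDr, !raddNr. apply rscal0r. Qed.

Lemma rnmul_scal n v : rnmul n v = rscal (INR n) v.
Proof.
  induction n as [|n IH]; simpl rnmul; [rewrite rscal0l; reflexivity|].
  rewrite IH, S_INR, Rplus_comm, rscalDl, rscal1. reflexivity.
Qed.

Lemma rscal_ge0 (k : R) v : (0 <= k)%R -> rle rzero v -> rle rzero (rscal k v).
Proof. intros Hk Hv. rewrite <- (rscal0r k). apply rle_scal; assumption. Qed.

Lemma rscal_le (k l : R) v : rle rzero v -> (k <= l)%R -> rle (rscal k v) (rscal l v).
Proof.
  intros Hv H. replace l with (k + (l - k))%R by ring. rewrite rscalDl.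
  apply rle_addr_ge0, rscal_ge0; [lra | exact Hv].
Qed.

Lemma rmeet_idl v w : rle v w -> rmeet v w = v.
Proof. intro H. apply rle_anti; [apply rmeet_l | apply rmeet_glb; [apply rle_refl | exact H]]. Qed.

Lemma rmeet_idr v w : rle w v -> rmeet v w = w.
Proof. intro H. apply rle_anti; [apply rmeet_r | apply rmeet_glb; [exact H | apply rle_refl]]. Qed.

(* [n (a - c e) <= e] for every [n], and the Archimedean property does the rest. *)
Lemma archimedean_le_scal (HA : archimedean V) e a (c : R) : rle rzero e ->
  (forall n, (0 < n)%nat -> exists k : R,
     rle (rscal (INR n) a) (rscal (k + 1) e) /\ (k <= INR n * c)%R) ->
  rle a (rscal c e).
Proof.
  intros He Hn. set (d := radd a (rscal (- c) e)).
  assert (Hd : rle d rzero).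
  { apply (HA d e). intros [|n]; [exact He|].
    destruct (Hn (S n) ltac:(lia)) as [k [Hk1 Hk2]].
    rewrite rnmul_scal. unfold d. rewrite rscalDr, rscalA.
    apply (rle_trans (y := radd (rscal (k + 1) e) (rscal (INR (S n) * - c) e))); [apply rle_add, Hk1|].
    rewrite <- rscalDl. rewrite <- (rscal1 e) at 2. apply rscal_le; [exact He | lra]. }
  pose proof (rle_add (rscal c e) Hd) as K. unfold d in K.
  rewrite <- raddA, <- rscalDl, Rplus_opp_l, rscal0l, radd0r, radd0 in K. exact K.
Qed.

Lemma archimedean_eq_scal (HA : archimedean V) e a (c : R) : rle rzero e ->
  (forall n, (0 < n)%nat -> exists k : R,
     rle (rscal k e) (rscal (INR n) a) /\ rle (rscal (INR n) a) (rscal (k + 1) e) /\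
     (k <= INR n * c <= k + 1)%R) ->
  a = rscal c e.
Proof.
  intros He Hn. apply rle_anti.
  - apply archimedean_le_scal; [exact HA | exact He|].
    intros n Hn0. destruct (Hn n Hn0) as [k [_ [Hk Hr]]]. exists k. split; [exact Hk | lra].
  - enough (K : rle (ropp a) (rscal (- c) e)).
    { apply rle_opp in K. rewrite rscalN, !roppK in K. exact K. }
    apply archimedean_le_scal; [exact HA | exact He|].
    intros n Hn0. destruct (Hn n Hn0) as [k [Hk [_ Hr]]]. exists (- k - 1)%R. split; [|lra].
    rewrite rscal_opp. replace (- k - 1 + 1)%R with (- k)%R by ring. rewrite rscalN.
    apply rle_opp, Hk.
Qed.

End RieszTheory.

(** * The unit measure and the states of Γ(G,u) *)

Lemma INR_div_le (p q p' q' : nat) : (0 < q)%nat -> (0 < q')%nat -> (p * q' <= p' * q)%nat ->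
  (INR p / INR q <= INR p' / INR q')%R.
Proof.
  intros Hq Hq' H. apply le_INR in H. rewrite !mult_INR in H. apply lt_0_INR in Hq, Hq'.
  apply (Rmult_le_reg_r (INR q * INR q')); [nra|].
  replace (INR p / INR q * (INR q * INR q'))%R with (INR p * INR q')%R by (field; lra).
  replace (INR p' / INR q' * (INR q * INR q'))%R with (INR p' * INR q)%R by (field; lra). lra.
Qed.

Lemma eq0_of_nat_mul_Rabs_le (d : R) : (forall q : nat, (0 < q)%nat -> (INR q * Rabs d <= 2)%R) -> d = 0%R.
Proof.
  intro H. destruct (Req_dec d 0) as [E|E]; [exact E|]. exfalso.
  assert (Hd : (0 < Rabs d)%R) by (apply Rabs_pos_lt, E).
  destruct (archimed_cor1 (Rabs d / 2) ltac:(lra)) as [N [HN HN0]].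
  specialize (H N HN0). apply lt_0_INR in HN0.
  apply (Rmult_lt_compat_l (INR N)) in HN; [|exact HN0].
  rewrite Rinv_r in HN by lra. unfold Rdiv in HN. nra.
Qed.

Section UnitValue.
Context {G : lgroup} (u : G).
Hypothesis Htot : forall x y : G, x ≼ y \/ y ≼ x.
Hypothesis HC : forall x y : G, x ⊞ y = y ⊞ x.
Hypothesis Hu : lstrong_unit u.
Implicit Types x y z : Gam u.

Lemma lunit_gt0 : llt lzero u.
Proof. split; [exact (proj1 Hu) | intro E; apply (proj1 (proj2 Hu)); symmetry; exact E]. Qed.

Lemma lnmul_unit_le_inv p q : lnmul p u ≼ lnmul q u -> (p <= q)%nat.
Proof.
  intro H. destruct (Nat.le_gt_cases p q) as [L|L]; [exact L|]. exfalso.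
  replace p with (q + (p - q))%nat in H by lia. rewrite <- lnmulD in H.
  apply (llt_not_le _ _ (llt_addl (lnmul q u) _ _ (lnmul_gt0 (p - q) u ltac:(lia) lunit_gt0))).
  rewrite ladd0r. exact H.
Qed.

Lemma lnmul_unit_llt_inv p q : llt (lnmul p u) (lnmul q u) -> (p < q)%nat.
Proof.
  intro H. destruct (Nat.le_gt_cases q p) as [L|L]; [exfalso | exact L].
  apply (llt_not_le _ _ H). replace p with (q + (p - q))%nat by lia. rewrite <- lnmulD.
  apply lle_addr_ge0, lnmul_ge0, (proj1 Hu).
Qed.

Lemma lnmul_unit_floor g : lzero ≼ g -> exists k, lnmul k u ≼ g /\ llt g (lnmul (S k) u).
Proof. exact (lnmul_floor Htot u g lunit_gt0 (proj2 (proj2 Hu))). Qed.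

Lemma lnmulDr n (a b : G) : lnmul n (a ⊞ b) = lnmul n a ⊞ lnmul n b.
Proof.
  induction n as [|n IH]; simpl; [rewrite ladd0l; reflexivity|].
  rewrite IH, <- !laddA. f_equal. rewrite !laddA. f_equal. apply HC.
Qed.

(* [umeas x], the supremum of these ratios, is the size of [x] in units of [u]. *)
Definition unit_ratio x (r : R) : Prop :=
  exists p q : nat, (0 < q)%nat /\ r = (INR p / INR q)%R /\ lnmul p u ≼ lnmul q (proj1_sig x).

Lemma unit_ratio_le1 x r : unit_ratio x r -> (r <= 1)%R.
Proof.
  intros [p [q [Hq [-> H]]]]. replace 1%R with (INR 1 / INR 1)%R by (simpl; field).
  apply INR_div_le; [exact Hq | lia|].
  enough (p <= q)%nat by lia. apply lnmul_unit_le_inv.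
  exact (lle_trans H (lnmul_le q _ _ (proj2 (proj2_sig x)))).
Qed.

Lemma unit_ratio0 x : unit_ratio x 0.
Proof.
  exists 0%nat, 1%nat. split; [lia | split; [simpl; field|]].
  simpl. rewrite ladd0r. exact (proj1 (proj2_sig x)).
Qed.

Definition umeas x : R :=
  proj1_sig (completeness (unit_ratio x)
    (ex_intro _ 1%R (unit_ratio_le1 x)) (ex_intro _ 0%R (unit_ratio0 x))).

Lemma umeas_lub x : is_lub (unit_ratio x) (umeas x).
Proof. exact (proj2_sig (completeness _ _ _)). Qed.

Lemma umeas_ge x p q : (0 < q)%nat -> lnmul p u ≼ lnmul q (proj1_sig x) -> (INR p / INR q <= umeas x)%R.
Proof. intros Hq H. apply (proj1 (umeas_lub x)). exists p, q. auto. Qed.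

Lemma umeas_le x k q : (0 < q)%nat -> llt (lnmul q (proj1_sig x)) (lnmul k u) ->
  (umeas x <= INR k / INR q)%R.
Proof.
  intros Hq H. apply (proj2 (umeas_lub x)). intros r [p' [q' [Hq' [-> H']]]].
  apply INR_div_le; [exact Hq' | exact Hq|].
  assert (K1 : lnmul (q * p') u ≼ lnmul (q * q') (proj1_sig x)) by (rewrite <- !lnmulM; apply lnmul_le, H').
  assert (K2 : llt (lnmul (q' * q) (proj1_sig x)) (lnmul (q' * k) u))
    by (rewrite <- !lnmulM; apply lnmul_llt; assumption).
  rewrite Nat.mul_comm in K2. pose proof (lnmul_unit_llt_inv _ _ (le_llt_trans _ _ _ K1 K2)). lia.
Qed.

Lemma umeas_between x q k l : (0 < q)%nat -> lnmul k u ≼ lnmul q (proj1_sig x) ->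
  llt (lnmul q (proj1_sig x)) (lnmul l u) -> (INR k <= INR q * umeas x <= INR l)%R.
Proof.
  intros Hq H1 H2. pose proof (umeas_ge _ _ _ Hq H1). pose proof (umeas_le _ _ _ Hq H2).
  apply lt_0_INR in Hq. unfold Rdiv in *.
  split; apply (Rmult_le_reg_r (/ INR q)); try (apply Rinv_0_lt_compat; exact Hq);
    replace (INR q * umeas x * / INR q)%R with (umeas x) by (field; lra); assumption.
Qed.

Lemma umeas_bounds x : (0 <= umeas x <= 1)%R.
Proof.
  split; [| apply (proj2 (umeas_lub x)); intros r Hr; apply (unit_ratio_le1 x r Hr)].
  replace 0%R with (INR 0 / INR 1)%R by (simpl; field). apply umeas_ge; [lia|].
  simpl. rewrite ladd0r. exact (proj1 (proj2_sig x)).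
Qed.

Lemma umeas1 : umeas (Gam1 (proj1 Hu)) = 1%R.
Proof.
  apply Rle_antisym; [apply umeas_bounds|].
  replace 1%R with (INR 1 / INR 1)%R by (simpl; field). apply umeas_ge; [lia | apply lle_refl].
Qed.

Lemma umeas_add x y z : proj1_sig z = proj1_sig x ⊞ proj1_sig y -> umeas z = (umeas x + umeas y)%R.
Proof.
  intro Ez. enough (umeas z - umeas x - umeas y = 0)%R by lra.
  apply eq0_of_nat_mul_Rabs_le. intros q Hq.
  destruct (lnmul_unit_floor (lnmul q (proj1_sig x))) as [kx [Hx1 Hx2]];
    [apply lnmul_ge0, (proj1 (proj2_sig x))|].
  destruct (lnmul_unit_floor (lnmul q (proj1_sig y))) as [ky [Hy1 Hy2]];
    [apply lnmul_ge0, (proj1 (proj2_sig y))|].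
  assert (Z1 : lnmul (kx + ky) u ≼ lnmul q (proj1_sig z)).
  { rewrite Ez, lnmulDr, <- lnmulD. apply lle_add2; assumption. }
  assert (Z2 : llt (lnmul q (proj1_sig z)) (lnmul (S (S (kx + ky))) u)).
  { rewrite Ez, lnmulDr. replace (S (S (kx + ky))) with (S kx + S ky)%nat by lia.
    rewrite <- lnmulD. apply llt_le_add; [exact Hx2 | exact (proj1 Hy2)]. }
  pose proof (umeas_between _ _ _ _ Hq Z1 Z2). pose proof (umeas_between _ _ _ _ Hq Hx1 Hx2).
  pose proof (umeas_between _ _ _ _ Hq Hy1 Hy2).
  rewrite !S_INR, plus_INR in *. pose proof (pos_INR q).
  rewrite <- (Rabs_pos_eq (INR q)), <- Rabs_mult by lra. apply Rabs_le. split; nra.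
Qed.

Lemma Gsum_defined_iff x y : Gsum_defined x y <-> proj1_sig x ⊞ proj1_sig y ≼ u.
Proof.
  unfold Gsum_defined, Godot. rewrite <- laddA, (HC (lopp u)), laddA. split.
  - intro H. apply (lle_addr_inv (lopp u)). rewrite laddNr, <- H. apply ljoin_l.
  - intro H. apply ljoin_idr. rewrite <- (laddNr u). apply lle_addr, H.
Qed.

Lemma Goplus_val_le x y :
  proj1_sig x ⊞ proj1_sig y ≼ u -> proj1_sig (Goplus x y) = proj1_sig x ⊞ proj1_sig y.
Proof. apply lmeet_idl. Qed.

Lemma Goplus_val_ge x y : u ≼ proj1_sig x ⊞ proj1_sig y -> proj1_sig (Goplus x y) = u.
Proof. intro H. simpl. rewrite lmeetC. apply lmeet_idl, H. Qed.

Lemma Goplus_comm : Gam_is_MV u.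
Proof. intros x y. apply Gam_eq. simpl. rewrite HC. reflexivity. Qed.

Lemma umeas_Rstate (V : riesz) (e : V) : rle rzero e ->
  is_Rstate (proj1 Hu) e (fun x => rscal (umeas x) e).
Proof.
  intro He. split; [|split].
  - intro x. destruct (umeas_bounds x). split; [apply rscal_ge0; assumption|].
    rewrite <- (rscal1 e) at 2. apply rscal_le; assumption.
  - rewrite umeas1. apply rscal1.
  - intros x y Hxy. rewrite <- rscalDl. f_equal. apply umeas_add, Goplus_val_le, Gsum_defined_iff, Hxy.
Qed.

Section RState.
Context {V : riesz} (e : V) (s : Gam u -> V).
Hypothesis Hs : is_Rstate (proj1 Hu) e s.

Lemma Rstate_range x : rle rzero (s x) /\ rle (s x) e.
Proof. exact (proj1 Hs x). Qed.

Lemma Rstate_unit_ge0 : rle rzero e.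
Proof. destruct (Rstate_range (Gam1 (proj1 Hu))) as [H0 H1]. exact (rle_trans H0 H1). Qed.

Lemma Rstate_add x y z : proj1_sig z = proj1_sig x ⊞ proj1_sig y -> s z = radd (s x) (s y).
Proof.
  intro E. assert (H : proj1_sig x ⊞ proj1_sig y ≼ u) by (rewrite <- E; exact (proj2 (proj2_sig z))).
  rewrite <- (proj2 (proj2 Hs) x y) by (apply Gsum_defined_iff, H).
  f_equal. apply Gam_eq. rewrite Goplus_val_le; assumption.
Qed.

Lemma Rstate0 z : proj1_sig z = lzero -> s z = rzero.
Proof.
  intro E. assert (K : s z = radd (s z) (s z)) by (apply Rstate_add; rewrite E, ladd0l; reflexivity).
  apply (radd_cancel_l (s z)). rewrite radd0r. symmetry. exact K.
Qed.

Lemma Rstate1 z : proj1_sig z = u -> s z = e.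
Proof. intro E. rewrite <- (proj1 (proj2 Hs)). f_equal. apply Gam_eq, E. Qed.

Lemma Rstate_compl x w : proj1_sig w = u ⊞ lopp (proj1_sig x) -> radd (s x) (s w) = e.
Proof.
  intro E. rewrite <- (Rstate1 (Gam1 (proj1 Hu))) by reflexivity. symmetry.
  apply Rstate_add. rewrite E, HC. symmetry. apply lsubrK.
Qed.

Lemma Rstate_compl_eq x w : proj1_sig w = u ⊞ lopp (proj1_sig x) -> s w = radd e (ropp (s x)).
Proof.
  intro E. apply (radd_cancel_l (s x)).
  rewrite (Rstate_compl x w E), raddCA, raddNr, radd0r. reflexivity.
Qed.

Lemma Rstate_le x y : proj1_sig x ≼ proj1_sig y -> rle (s x) (s y).
Proof.
  intro H. rewrite (Rstate_add x (Gsub y x H) y) by (simpl; rewrite HC; symmetry; apply lsubrK).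
  apply rle_addr_ge0, Rstate_range.
Qed.

Lemma Rstate_carry x r : u ≼ proj1_sig x ⊞ proj1_sig r ->
  exists r' : Gam u, proj1_sig r' = proj1_sig x ⊞ proj1_sig r ⊞ lopp u /\
    radd (s x) (s r) = radd e (s r').
Proof.
  intro H. set (a := proj1_sig x ⊞ proj1_sig r ⊞ lopp u).
  assert (Hr' : lzero ≼ a /\ a ≼ u).
  { split; [apply lsubr_ge0, H|]. apply (lle_addr_inv u). unfold a. rewrite lsubrK.
    apply lle_add2; [exact (proj2 (proj2_sig x)) | exact (proj2 (proj2_sig r))]. }
  set (r' := exist _ _ Hr' : Gam u). exists r'. split; [reflexivity|].
  set (w := Gsub (Gam1 (proj1 Hu)) r (proj2 (proj2_sig r))).
  rewrite (Rstate_add r' w x).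
  - rewrite <- raddA, (raddC (s w)), (Rstate_compl r w eq_refl). apply raddC.
  - simpl. unfold a. rewrite <- laddA, laddKl, laddrK. reflexivity.
Qed.

Lemma Rstate_nmul_decomp q x : exists k (r : Gam u), llt (proj1_sig r) u /\
  lnmul q (proj1_sig x) = lnmul k u ⊞ proj1_sig r /\ rnmul q (s x) = radd (rnmul k e) (s r).
Proof.
  induction q as [|q [k [r [Hr [E1 E2]]]]].
  - exists 0%nat, (Gam0 (proj1 Hu)). split; [exact lunit_gt0 | split; simpl; [rewrite ladd0l; reflexivity|]].
    rewrite radd0. symmetry. apply Rstate0. reflexivity.
  - assert (Eg : lnmul (S q) (proj1_sig x) = lnmul k u ⊞ (proj1_sig x ⊞ proj1_sig r)).
    { simpl. rewrite E1, !laddA, (HC _ (lnmul k u)). reflexivity. }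
    assert (Ev : rnmul (S q) (s x) = radd (rnmul k e) (radd (s x) (s r))).
    { simpl. rewrite E2. apply raddCA. }
    destruct (lle_or_llt Htot u (proj1_sig x ⊞ proj1_sig r)) as [L|L].
    + destruct (Rstate_carry x r L) as [r' [Er' Ev']]. exists (S k), r'. split; [|split].
      * rewrite Er'. apply (le_llt_trans _ (proj1_sig r)); [|exact Hr].
        apply (lle_addr_inv u). rewrite lsubrK, (HC (proj1_sig r)). apply lle_addr, (proj2 (proj2_sig x)).
      * rewrite Eg, Er'. simpl. rewrite (HC u), <- laddA, (HC u), lsubrK. reflexivity.
      * rewrite Ev, Ev'. simpl. rewrite raddA, (raddC (rnmul k e)). reflexivity.
    + set (a := proj1_sig x ⊞ proj1_sig r).
      assert (Ha : lzero ≼ a /\ a ≼ u)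
        by (split; [apply lle_add0; [exact (proj1 (proj2_sig x)) | exact (proj1 (proj2_sig r))]
                   | exact (proj1 L)]).
      exists k, (exist _ a Ha). split; [exact L | split; [exact Eg|]].
      rewrite Ev. f_equal. symmetry. apply Rstate_add. reflexivity.
Qed.

Lemma Rstate_morphism : is_Rstate_morphism (proj1 Hu) e s.
Proof.
  split; [exact Rstate_range|]. split; [apply Rstate0; reflexivity|]. split; [|split].
  - intros x y. destruct (Htot (proj1_sig x ⊞ proj1_sig y) u) as [L|L].
    + rewrite (Rstate_add x y (Goplus x y) (Goplus_val_le x y L)). symmetry. apply rmeet_idl.
      rewrite <- (Rstate_add x y (Goplus x y) (Goplus_val_le x y L)). apply Rstate_range.
    + rewrite (Rstate1 _ (Goplus_val_ge x y L)). symmetry. apply rmeet_idr.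
      set (w := Gsub (Gam1 (proj1 Hu)) x (proj2 (proj2_sig x))).
      rewrite <- (Rstate_compl x w eq_refl). apply rle_add2; [apply rle_refl | apply Rstate_le].
      apply (lle_addl_inv (proj1_sig x)). simpl. rewrite (HC u), lsubKl. exact L.
  - intro x. apply Rstate_compl_eq. reflexivity.
  - intro x. rewrite raddC. apply Rstate_compl_eq. apply HC.
Qed.

Lemma Rstate_Ker_maximal : e <> rzero ->
  (forall (J : Gam u -> Prop) x, Gideal J -> (exists z, ~ J z) -> J x -> proj1_sig x = lzero) ->
  Gmaximal_ideal (Ker s).
Proof.
  intros He Hsimple. destruct Rstate_morphism as [_ [_ [Hoplus _]]].
  split; [|split].
  - split; [exists (Gam0 (proj1 Hu)); apply Rstate0; reflexivity | split].
    + intros x y Hy Hxy. apply rle_anti; [rewrite <- Hy; apply Rstate_le, Hxy | apply Rstate_range].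
    + intros x y Hx Hy. unfold Ker. rewrite Hoplus, Hx, Hy, radd0. apply rmeet_idl, Rstate_unit_ge0.
  - exists (Gam1 (proj1 Hu)). unfold Ker. rewrite Rstate1 by reflexivity. exact He.
  - intros J HJ Hprop _ x Jx. apply Rstate0, (Hsimple J x HJ Hprop Jx).
Qed.

Lemma Rstate_eq_umeas : archimedean V -> forall x, s x = rscal (umeas x) e.
Proof.
  intros HA x. apply archimedean_eq_scal; [exact HA | exact Rstate_unit_ge0|]. intros n Hn.
  destruct (Rstate_nmul_decomp n x) as [k [r [Hr [Eg Ev]]]].
  exists (INR k). rewrite <- !rnmul_scal, Ev, rnmul_scal, rscalDl, rscal1.
  split; [|split].
  - apply rle_addr_ge0, Rstate_range.
  - apply rle_add2; [apply rle_refl | apply Rstate_range].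
  - rewrite <- S_INR. apply (umeas_between x n k (S k) Hn).
    + rewrite Eg. apply lle_addr_ge0, (proj1 (proj2_sig r)).
    + rewrite Eg. simpl. rewrite (HC u). apply llt_addl, Hr.
Qed.

End RState.
End UnitValue.

Theorem proposition3p14 (G : lgroup) (u : G) (Hu : lstrong_unit u) :
  (forall x : Gam u, proj1_sig x <> lzero -> lstrong_unit (proj1_sig x)) ->
  Gam_is_MV u /\
  (forall (V : riesz) (e : V), rstrong_unit e ->
     (exists s : Gam u -> V, is_Rstate (proj1 Hu) e s) /\
     (forall s : Gam u -> V, is_Rstate (proj1 Hu) e s ->
        is_Rstate_morphism (proj1 Hu) e s /\ Gmaximal_ideal (Ker s)) /\
     (archimedean V ->
        exists s : Gam u -> V, is_Rstate (proj1 Hu) e s /\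
          forall t : Gam u -> V, is_Rstate (proj1 Hu) e t -> forall x, t x = s x)).
Proof.
  intro Hyp.
  assert (Hstrong : forall x : G, lzero ≼ x -> x ≼ u -> x <> lzero -> forall g, exists n, g ≼ lnmul n x)
    by (intros x H0 H1 Hx; exact (proj2 (proj2 (Hyp (exist _ x (conj H0 H1)) Hx)))).
  pose proof (lle_total u Hu Hstrong) as Htot.
  pose proof (laddC Htot (llt0_strong_unit u Hu Hstrong)) as HC.
  split; [exact (Goplus_comm u HC)|].
  intros V e [He0 [Hne _]]. split; [|split].
  - eexists. exact (umeas_Rstate u Htot HC Hu V e He0).
  - intros s Hs. split; [exact (Rstate_morphism u Htot HC Hu e s Hs)|].
    exact (Rstate_Ker_maximal u Htot HC Hu e s Hs Hne (Gideal_proper_eq0 u Hu Hstrong)).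
  - intro HA. eexists. split; [exact (umeas_Rstate u Htot HC Hu V e He0)|].
    intros t Ht x. exact (Rstate_eq_umeas u Htot HC Hu e t Ht HA x).
Qed.
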